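(* Let $\mathscr{G}_n$ be a simple, verbose $\upsilon$-reduction grammar. Then for each production $G_n \to \chi[\sigma_1]\cdots[\sigma_w]$ of $\mathscr{G}_n$ whose right-hand side has closure width $w$ (with head $\chi$), either $\chi = N$ or $\chi = f(\alpha_1,\dots,\alpha_m)$ for some function symbol $f$ of arity $m$ other than the closure symbol $\cdot[\cdot]$.
   Context: $\lambda\upsilon$-terms: $t ::= \underline{n} \mid \lambda t \mid t\,t \mid t[s]$; substitutions $s ::= t/ \mid \Uparrow(s) \mid\ \uparrow$; indices $\underline{n} ::= \underline{0} \mid \mathtt{S}\,\underline{n}$. The $\upsilon$-rules: $(a b)[s] \to a[s](b[s])$; $(\lambda a)[s] \to \lambda(a[\Uparrow(s)])$; $\underline{0}[a/] \to a$; $(\mathtt{S}\,\underline{n})[a/] \to \underline{n}$; $\underline{0}[\Uparrow(s)] \to \underline{0}$; $(\mathtt{S}\,\underline{n})[\Uparrow(s)] \to \underline{n}[s][\uparrow]$; $\underline{n}[\uparrow] \to \mathtt{S}\,\underline{n}$. A term normalises in $k$ steps if leftmost-outermost $\upsilon$-reduction reaches a $\upsilon$-normal form in exactly $k$ steps. $\mathscr{F}$ is the ranked alphabet of $\lambda\upsilon$ symbols (application, closure $\cdot[\cdot]$ binary; $\lambda$, $\cdot/$, $\Uparrow$, $\mathtt{S}$ unary; $\uparrow,\underline{0}$ constants); $\mathscr{T}_{\mathscr{F}}(X)$ is the set of terms over $\mathscr{F}$ with variables from $X$. In a regular tree grammar with productions $X\to\alpha$, $L(\alpha)$ is the set of ground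 terms derivable from $\alpha$; a non-terminal is unambiguous if each ground term has at most one derivation from it; a production $X\to\alpha$ is self-referencing if $X$ occurs in $\alpha$, regular otherwise. $\Lambda$ has productions $T \to N \mid \lambda T \mid T T \mid T[S]$, $S \to T/ \mid \Uparrow(S) \mid \uparrow$, $N \to \underline{0} \mid \mathtt{S} N$. A $\upsilon$-reduction grammar $\mathscr{G}_n$ has axiom $G_n$, non-terminals $\{T,S,N,G_0,\dots,G_n\}$, contains all productions of $\Lambda$, and each $G_k$ ($0\le k\le n$) is unambiguous with $L(G_k)$ the set of terms normalising in exactly $k$ steps. It is simple if its self-referencing productions are productions of $\Lambda$ or of the form $G_k \to \lambda G_k \mid G_0 G_k \mid G_k G_0$, and each regular production $G_k\to\alpha$ has $\alpha \in \mathscr{T}_{\mathscr{F}}(\{T,S,N,G_0,\dots,G_{k-1}\})$. It is verbose if none of its productions has the form $X \to G_k[\sigma_1]\cdots[\sigma_w]$ for some $k$ and $w\ge 0$. A term $\alpha$ has closure width $w$ if $w$ is the largest non-negative integer such that $\alpha = \chi[\sigma_1]\cdots[\sigma_w]$ for some term $\chi$ (the head) and terms $\sigma_1,\dots,\sigma_w$. *)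

From Stdlib Require Import List.
Import ListNotations.
Set Implicit Arguments.

(* App, Clos (the closure symbol _[_]) binary; Lam, Slash (_/), Lift (⇑),
   Succ (S) unary; Shift (↑), Zero (0) constants. *)
Inductive tm (V : Type) : Type :=
| Var   : V -> tm V
| Zero  : tm V
| Succ  : tm V -> tm V
| Lam   : tm V -> tm V
| App   : tm V -> tm V -> tm V
| Clos  : tm V -> tm V -> tm V
| Slash : tm V -> tm V
| Lift  : tm V -> tm V
| Shift : tm V.
Arguments Zero {V}.
Arguments Shift {V}.

Definition gtm := tm Empty_set.

Inductive is_ix : gtm -> Prop :=
| ix_zero : is_ix Zero
| ix_succ n : is_ix n -> is_ix (Succ n).

Inductive is_tm : gtm -> Prop :=
| tm_ix n : is_ix n -> is_tm n
| tm_lam a : is_tm a -> is_tm (Lam a)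
| tm_app a b : is_tm a -> is_tm b -> is_tm (App a b)
| tm_clos a s : is_tm a -> is_sb s -> is_tm (Clos a s)
with is_sb : gtm -> Prop :=
| sb_slash a : is_tm a -> is_sb (Slash a)
| sb_lift s : is_sb s -> is_sb (Lift s)
| sb_shift : is_sb Shift.

Inductive rootstep : gtm -> gtm -> Prop :=
| r_app a b s : rootstep (Clos (App a b) s) (App (Clos a s) (Clos b s))
| r_lam a s : rootstep (Clos (Lam a) s) (Lam (Clos a (Lift s)))
| r_zslash a : rootstep (Clos Zero (Slash a)) a
| r_sslash n a : is_ix n -> rootstep (Clos (Succ n) (Slash a)) n
| r_zlift s : rootstep (Clos Zero (Lift s)) Zero
| r_slift n s : is_ix n -> rootstep (Clos (Succ n) (Lift s)) (Clos (Clos n s) Shift)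
| r_shift n : is_ix n -> rootstep (Clos n Shift) (Succ n).

Definition redex (t : gtm) : Prop := exists u, rootstep t u.

Fixpoint nf (t : gtm) : Prop :=
  ~ redex t /\
  match t with
  | Var _ | Zero | Shift => True
  | Succ a | Lam a | Slash a | Lift a => nf a
  | App a b | Clos a b => nf a /\ nf b
  end.

(** one leftmost-outermost upsilon-step *)
Inductive lo_step : gtm -> gtm -> Prop :=
| lo_root t u : rootstep t u -> lo_step t u
| lo_succ a a' : lo_step a a' -> lo_step (Succ a) (Succ a')
| lo_lam a a' : lo_step a a' -> lo_step (Lam a) (Lam a')
| lo_slash a a' : lo_step a a' -> lo_step (Slash a) (Slash a')
| lo_lift a a' : lo_step a a' -> lo_step (Lift a) (Lift a')
| lo_appl a a' b : ~ redex (App a b) -> lo_step a a' -> lo_step (App a b) (App a' b)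
| lo_appr a b b' : ~ redex (App a b) -> nf a -> lo_step b b' -> lo_step (App a b) (App a b')
| lo_closl a a' b : ~ redex (Clos a b) -> lo_step a a' -> lo_step (Clos a b) (Clos a' b)
| lo_closr a b b' : ~ redex (Clos a b) -> nf a -> lo_step b b' -> lo_step (Clos a b) (Clos a b').

Fixpoint lo_nsteps (k : nat) (t u : gtm) : Prop :=
  match k with
  | O => t = u
  | S k' => exists v, lo_step t v /\ lo_nsteps k' v u
  end.

Definition normalises_in (k : nat) (t : gtm) : Prop :=
  exists u, lo_nsteps k t u /\ nf u.

Inductive nt : Type := NT_T | NT_S | NT_N | NT_G (k : nat).

(** a grammar = its (boolean) set of productions X -> alpha *)
Definition grammar := nt -> tm nt -> bool.

(** derivations of a ground term from a right-hand side (derivation trees) *)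
Inductive deriv (g : grammar) : tm nt -> gtm -> Type :=
| d_var X beta t : g X beta = true -> deriv g beta t -> deriv g (Var X) t
| d_zero : deriv g Zero Zero
| d_succ a a' : deriv g a a' -> deriv g (Succ a) (Succ a')
| d_lam a a' : deriv g a a' -> deriv g (Lam a) (Lam a')
| d_app a a' b b' : deriv g a a' -> deriv g b b' -> deriv g (App a b) (App a' b')
| d_clos a a' b b' : deriv g a a' -> deriv g b b' -> deriv g (Clos a b) (Clos a' b')
| d_slash a a' : deriv g a a' -> deriv g (Slash a) (Slash a')
| d_lift a a' : deriv g a a' -> deriv g (Lift a) (Lift a')
| d_shift : deriv g Shift Shift.

Definition in_lang (g : grammar) (alpha : tm nt) (t : gtm) : Prop :=
  inhabited (deriv g alpha t).

Definition unambiguous (g : grammar) (X : nt) : Prop :=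
  forall t (d1 d2 : deriv g (Var X) t), d1 = d2.

Fixpoint occurs (X : nt) (a : tm nt) : Prop :=
  match a with
  | Var Y => Y = X
  | Zero | Shift => False
  | Succ a | Lam a | Slash a | Lift a => occurs X a
  | App a b | Clos a b => occurs X a \/ occurs X b
  end.

Fixpoint vars_in (P : nt -> Prop) (a : tm nt) : Prop :=
  match a with
  | Var Y => P Y
  | Zero | Shift => True
  | Succ a | Lam a | Slash a | Lift a => vars_in P a
  | App a b | Clos a b => vars_in P a /\ vars_in P b
  end.

Inductive lambda_prod : nt -> tm nt -> Prop :=
| lp_TN : lambda_prod NT_T (Var NT_N)
| lp_Tlam : lambda_prod NT_T (Lam (Var NT_T))
| lp_Tapp : lambda_prod NT_T (App (Var NT_T) (Var NT_T))
| lp_Tclos : lambda_prod NT_T (Clos (Var NT_T) (Var NT_S))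
| lp_Sslash : lambda_prod NT_S (Slash (Var NT_T))
| lp_Slift : lambda_prod NT_S (Lift (Var NT_S))
| lp_Sshift : lambda_prod NT_S Shift
| lp_Nzero : lambda_prod NT_N Zero
| lp_Nsucc : lambda_prod NT_N (Succ (Var NT_N)).

Definition nt_le (n : nat) (X : nt) : Prop :=
  match X with NT_G k => k <= n | _ => True end.

Definition nt_lt (k : nat) (X : nt) : Prop :=
  match X with NT_G j => j < k | _ => True end.

Definition upsilon_reduction_grammar (n : nat) (g : grammar) : Prop :=
  (* regular tree grammar: finitely many productions *)
  (exists s : list (nt * tm nt), forall X a, g X a = true -> In (X, a) s) /\
  (forall X a, g X a = true -> nt_le n X /\ vars_in (nt_le n) a) /\
  (forall X a, lambda_prod X a -> g X a = true) /\
  (forall k, k <= n ->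
     unambiguous g (NT_G k) /\
     forall t, in_lang g (Var (NT_G k)) t <-> (is_tm t /\ normalises_in k t)).

Definition simple_grammar (g : grammar) : Prop :=
  forall X a, g X a = true ->
    (occurs X a ->
       lambda_prod X a \/
       exists k, X = NT_G k /\
         (a = Lam (Var (NT_G k)) \/
          a = App (Var (NT_G 0)) (Var (NT_G k)) \/
          a = App (Var (NT_G k)) (Var (NT_G 0)))) /\
    (~ occurs X a -> forall k, X = NT_G k -> vars_in (nt_lt k) a).

Definition closify (chi : tm nt) (sigmas : list (tm nt)) : tm nt :=
  fold_left (fun a s => Clos a s) sigmas chi.

Definition verbose (g : grammar) : Prop :=
  forall X a, g X a = true ->
    forall k sigmas, a <> closify (Var (NT_G k)) sigmas.

Definition closure_width (alpha : tm nt) (w : nat) : Prop :=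
  (exists chi sigmas, length sigmas = w /\ alpha = closify chi sigmas) /\
  (forall chi sigmas, alpha = closify chi sigmas -> length sigmas <= w).

Definition closure_head (alpha chi : tm nt) : Prop :=
  exists sigmas, alpha = closify chi sigmas /\ closure_width alpha (length sigmas).

Definition nonclosure_symbol_app (chi : tm nt) : Prop :=
  match chi with
  | Var _ | Clos _ _ => False
  | _ => True
  end.

(** Take a production [G_n -> chi[sigma_1]...[sigma_w]] of maximal closure width.
    Every non-terminal generates some term ([G_k] contains [0[↑]...[↑]] with [k]
    shifts), so for each [t] in [L(chi)] some [t[s_1]...[s_w]] is a λυ-term
    normalising in exactly [n] steps.  Maximality of [w] excludes a closure head
    and verbosity excludes [G_k].  For [chi = S], [↑[s_1]...[s_w]] is not a term;
    for [chi = T], leftmost-outermost reduction of [0[↑]^(n+1)[s_1]...[s_w]]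
    spends its first [n] steps on the shifts and then still faces the redex
    [n[↑]]. *)

From Stdlib Require Import List Lia.
Import ListNotations.
Set Implicit Arguments.

Lemma rootstep_functional t u1 u2 : rootstep t u1 -> rootstep t u2 -> u1 = u2.
Proof.
  intros H1 H2; inversion H1; subst; inversion H2; subst; try reflexivity;
    repeat match goal with H : is_ix _ |- _ => inversion H; clear H end.
Qed.

Lemma rootstep_closure t u : rootstep t u -> exists a s, t = Clos a s.
Proof. destruct 1; eauto. Qed.

Lemma nf_not_redex t : nf t -> ~ redex t.
Proof. destruct t; simpl; tauto. Qed.

Lemma lo_step_not_nf t u : lo_step t u -> ~ nf t.
Proof.
  induction 1; simpl; try tauto.
  intros Hnf; apply (nf_not_redex Hnf); eexists; eauto.
Qed.

Lemma lo_step_functional t u1 u2 : lo_step t u1 -> lo_step t u2 -> u1 = u2.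
Proof.
  intros H1; revert u2; induction H1; intros u2 H2; inversion H2; subst;
    try (f_equal; auto; fail);
    try (eapply rootstep_functional; eauto; fail);
    try (match goal with H : rootstep _ _ |- _ =>
           destruct (rootstep_closure H) as [? [? ?]]; discriminate end);
    exfalso;
    match goal with
    | H : nf ?a, H' : lo_step ?a _ |- _ => exact (lo_step_not_nf H' H)
    | H : ~ redex _ |- _ => apply H; eexists; eauto
    end.
Qed.

Lemma lo_nsteps_functional {k t u1 u2} :
  lo_nsteps k t u1 -> lo_nsteps k t u2 -> u1 = u2.
Proof.
  revert t; induction k as [|k IH]; simpl; intros t H1 H2.
  - congruence.
  - destruct H1 as [v1 [Hv1 H1]], H2 as [v2 [Hv2 H2]].
    rewrite (lo_step_functional Hv1 Hv2) in H1; eauto.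
Qed.

Lemma lo_nsteps_not_normalises_in k t u :
  lo_nsteps k t u -> ~ nf u -> ~ normalises_in k t.
Proof.
  intros Htu Hu [v [Htv Hv]].
  rewrite (lo_nsteps_functional Htv Htu) in Hv; auto.
Qed.

Definition gclosify (a : gtm) (ss : list gtm) : gtm :=
  fold_left (fun a s => Clos a s) ss a.

Fixpoint index (j : nat) : gtm :=
  match j with O => Zero | S j => Succ (index j) end.

Fixpoint shifts (m : nat) (x : gtm) : gtm :=
  match m with O => x | S m => Clos (shifts m x) Shift end.

Lemma is_ix_index j : is_ix (index j).
Proof. induction j; constructor; auto. Qed.

Lemma nf_index j : nf (index j).
Proof. induction j; simpl; split; auto; intros [u H]; inversion H. Qed.

Lemma clos_clos_not_redex a b s : ~ redex (Clos (Clos a b) s).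
Proof.
  intros [u H]; inversion H; subst;
    match goal with H : is_ix _ |- _ => inversion H end.
Qed.

Lemma lo_step_gclosify ss : forall a s u,
  lo_step (Clos a s) u -> lo_step (gclosify (Clos a s) ss) (gclosify u ss).
Proof.
  induction ss as [|s' ss IH]; simpl; intros a s u H; auto.
  apply IH, lo_closl; [apply clos_clos_not_redex | exact H].
Qed.

Lemma lo_step_shifts m j : lo_step (shifts (S m) (index j)) (shifts m (index (S j))).
Proof.
  induction m as [|m IH]; simpl.
  - apply lo_root, r_shift, is_ix_index.
  - apply lo_closl; [apply clos_clos_not_redex | exact IH].
Qed.

Lemma index_add_succ m j : index (m + S j) = Succ (index (m + j)).
Proof. now rewrite <- plus_n_Sm. Qed.

Lemma lo_nsteps_shifts m : forall j, lo_nsteps m (shifts m (index j)) (index (m + j)).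
Proof.
  induction m as [|m IH]; intros j; simpl; auto.
  exists (shifts m (index (S j))); split; [apply lo_step_shifts|].
  rewrite <- index_add_succ; apply IH.
Qed.

Lemma lo_nsteps_gclosify_shifts ss m : forall j,
  lo_nsteps m (gclosify (shifts (S m) (index j)) ss)
              (gclosify (shifts 1 (index (m + j))) ss).
Proof.
  induction m as [|m IH]; intros j; simpl; auto.
  exists (gclosify (shifts (S m) (index (S j))) ss); split.
  - apply lo_step_gclosify, (lo_step_shifts (S m) j).
  - rewrite <- index_add_succ; apply IH.
Qed.

Lemma nf_gclosify ss : forall a, nf (gclosify a ss) -> nf a.
Proof.
  induction ss as [|s ss IH]; simpl; intros a H; auto.
  apply IH in H; simpl in H; tauto.
Qed.

Lemma gclosify_shifts_not_normalises_in ss n :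
  ~ normalises_in n (gclosify (shifts (S n) Zero) ss).
Proof.
  eapply lo_nsteps_not_normalises_in; [apply (lo_nsteps_gclosify_shifts ss n 0)|].
  intros Hnf; apply nf_gclosify in Hnf; destruct Hnf as [Hredex _].
  apply Hredex; eexists; apply r_shift, is_ix_index.
Qed.

Lemma is_tm_gclosify ss : forall a, is_tm (gclosify a ss) -> is_tm a.
Proof.
  induction ss as [|s ss IH]; simpl; intros a H; auto.
  apply IH in H; inversion H as [? Hix| | |]; subst; auto; inversion Hix.
Qed.

Lemma is_tm_shifts_Zero m : is_tm (shifts m Zero).
Proof.
  induction m; simpl.
  - repeat constructor.
  - apply tm_clos; [assumption | constructor].
Qed.

Lemma normalises_in_shifts_Zero k : normalises_in k (shifts k Zero).
Proof.
  exists (index (k + 0)); split; [apply (lo_nsteps_shifts k 0) | apply nf_index].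
Qed.

Lemma vars_in_closify P sigmas : forall chi, vars_in P (closify chi sigmas) ->
  vars_in P chi /\ forall s, In s sigmas -> vars_in P s.
Proof.
  induction sigmas as [|s sigmas IH]; simpl; intros chi H.
  - tauto.
  - apply IH in H; destruct H as [[Hchi Hs] Hsigmas].
    split; auto; intros s' [<-|Hs']; auto.
Qed.

Lemma in_lang_production g X alpha t :
  g X alpha = true -> in_lang g alpha t -> in_lang g (Var X) t.
Proof. intros HX [d]; constructor; econstructor; eauto. Qed.

Lemma in_lang_closify g sigmas : forall chi t, in_lang g chi t ->
  (forall s, In s sigmas -> exists u, in_lang g s u) ->
  exists ss, in_lang g (closify chi sigmas) (gclosify t ss).
Proof.
  induction sigmas as [|s sigmas IH]; simpl; intros chi t Ht Hne.
  - now exists [].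
  - destruct Ht as [dt], (Hne s (or_introl eq_refl)) as [u [du]].
    destruct (IH (Clos chi s) (Clos t u)) as [ss Hss].
    + constructor; now constructor.
    + intros s' Hs'; apply Hne; now right.
    + now exists (u :: ss).
Qed.

Lemma closure_head_not_clos alpha a b : ~ closure_head alpha (Clos a b).
Proof.
  intros [sigmas [Halpha [_ Hmax]]].
  specialize (Hmax a (b :: sigmas) Halpha); simpl in Hmax; lia.
Qed.

Section LambdaProductions.

Context {g : grammar}.
Hypothesis g_lambda : forall X a, lambda_prod X a -> g X a = true.

Lemma in_lang_lambda X a t : lambda_prod X a -> in_lang g a t -> in_lang g (Var X) t.
Proof. intros HXa; apply in_lang_production, g_lambda, HXa. Qed.

Lemma in_lang_S_Shift : in_lang g (Var NT_S) Shift.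
Proof. apply (in_lang_lambda lp_Sshift); repeat constructor. Qed.

Lemma in_lang_T_shifts_Zero m : in_lang g (Var NT_T) (shifts m Zero).
Proof.
  induction m as [|m [d]]; simpl.
  - apply (in_lang_lambda lp_TN), (in_lang_lambda lp_Nzero); repeat constructor.
  - destruct in_lang_S_Shift as [dS].
    apply (in_lang_lambda lp_Tclos); repeat constructor; auto.
Qed.

End LambdaProductions.

Section ReductionGrammar.

Context {n : nat} {g : grammar}.
Hypothesis g_reduction : upsilon_reduction_grammar n g.

Lemma in_lang_G_iff k t : k <= n ->
  in_lang g (Var (NT_G k)) t <-> is_tm t /\ normalises_in k t.
Proof. intros Hk; apply (proj2 (proj2 (proj2 g_reduction)) k Hk). Qed.

Lemma in_lang_nonempty beta : vars_in (nt_le n) beta -> exists u, in_lang g beta u.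
Proof.
  destruct g_reduction as [_ [_ [g_lambda _]]].
  induction beta as [X| |a IH|a IH|a IHa b IHb|a IHa b IHb|a IH|a IH|];
    simpl; intros Hvars;
    try first
      [ solve [eexists; repeat constructor]
      | destruct (IH Hvars) as [u [d]]; eexists; constructor; constructor; exact d
      | destruct Hvars as [Ha Hb], (IHa Ha) as [u [du]], (IHb Hb) as [v [dv]];
        eexists; constructor; constructor; eassumption ].
  destruct X as [| | |k].
  - exists (shifts 0 Zero); now apply in_lang_T_shifts_Zero.
  - exists Shift; now apply in_lang_S_Shift.
  - exists Zero; apply (in_lang_lambda g_lambda lp_Nzero); repeat constructor.
  - exists (shifts k Zero); apply (in_lang_G_iff _ Hvars).
    split; [apply is_tm_shifts_Zero | apply normalises_in_shifts_Zero].
Qed.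

Lemma production_head_in_lang chi sigmas t :
  g (NT_G n) (closify chi sigmas) = true -> in_lang g chi t ->
  exists ss, is_tm (gclosify t ss) /\ normalises_in n (gclosify t ss).
Proof.
  intros Hprod Ht.
  destruct (proj1 (proj2 g_reduction) _ _ Hprod) as [_ Hvars].
  destruct (vars_in_closify _ _ _ Hvars) as [_ Hsigmas].
  destruct (in_lang_closify sigmas Ht) as [ss Hss].
  - intros s Hs; apply in_lang_nonempty, Hsigmas, Hs.
  - exists ss; apply (in_lang_G_iff _ (le_n n)), (in_lang_production _ Hprod Hss).
Qed.

End ReductionGrammar.

Theorem mainTheorem5 (n : nat) (g : grammar) :
  upsilon_reduction_grammar n g -> simple_grammar g -> verbose g ->
  forall alpha chi, g (NT_G n) alpha = true -> closure_head alpha chi ->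
    chi = Var NT_N \/ nonclosure_symbol_app chi.
Proof.
  intros Hred _ Hverbose alpha chi Hprod Hhead.
  pose proof (proj1 (proj2 (proj2 Hred))) as g_lambda.
  pose proof Hhead as [sigmas [-> _]].
  destruct chi as [[| | |k]| | | | |a b| | |]; simpl; auto; exfalso.
  - destruct (production_head_in_lang Hred _ Hprod (in_lang_T_shifts_Zero g_lambda (S n)))
      as [ss [_ Hnorm]].
    exact (gclosify_shifts_not_normalises_in ss Hnorm).
  - destruct (production_head_in_lang Hred _ Hprod (in_lang_S_Shift g_lambda))
      as [ss [Htm _]].
    apply is_tm_gclosify in Htm; inversion Htm as [? Hix| | |]; inversion Hix.
  - exact (Hverbose _ _ Hprod k sigmas eq_refl).
  - exact (closure_head_not_clos Hhead).
Qed.
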